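(* Let $g\in\mathscr H$. For every $f\in\mathscr H$ such that $L(f)=g$, one has $\operatorname{val} f\in\{\pi(\operatorname{val} g)\}\cup-\mathcal S(L)$.
   Context: Let $\mathbf K$ be a field and $\ell\geq 2$ an integer. Let $\mathscr H$ be the field of Hahn series $f=\sum_{\gamma\in\mathbb Q}f_\gamma z^\gamma$ with coefficients in $\mathbf K$ and well-ordered support $\operatorname{supp} f=\{\gamma: f_\gamma\neq 0\}$, with $\operatorname{val} f=\min\operatorname{supp} f$ ($\operatorname{val}0=+\infty$). Let $\phi_\ell$ be the automorphism $f(z)\mapsto f(z^\ell)$. Let $L=a_n\phi_\ell^n+\dots+a_0$ with $n\geq1$, $a_i\in\mathbf K[z]$, $a_0a_n\neq0$, acting by $L(f)=\sum_i a_i f(z^{\ell^i})$. Let $\mathcal P(L)=\{(\ell^i,j): 0\le i\le n,\ j\in\operatorname{supp} a_i\}$. The Newton polygon $\mathcal N(L)$ is the convex hull of $\{(\ell^i,j): 0\le i\le n,\ j\geq\operatorname{val} a_i\}\subset\mathbb R^2$; the slopes of its non-vertical edges form the set $\mathcal S(L)$, and $-\mathcal S(L)=\{-\mu:\mu\in\mathcal S(L)\}$. Define $\pi(q)=\max\{(q-j)/\ell^i:(\ell^i,j)\in\mathcal P(L)\}$ for $q\in\mathbb Q$, and $\pi(+\infty)=+\infty$. *)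

From Stdlib Require Import ClassicalEpsilon.
From mathcomp Require Import all_boot all_order all_algebra.
Set Implicit Arguments. Unset Strict Implicit. Unset Printing Implicit Defensive.
Import Order.TTheory GRing.Theory Num.Theory.
Local Open Scope ring_scope.

Section Hahn.
Variable K : fieldType.

(* A Hahn series with rational exponents is represented by its coefficient
   function f : rat -> K (f g = coefficient of z^g); it is a Hahn series when
   its support is well ordered: every nonempty subset of the support has a
   least element. *)
Definition hahn (f : rat -> K) : Prop :=
  forall A : rat -> Prop, (exists x, A x) -> (forall x, A x -> f x != 0) ->
    exists m, A m /\ forall y, A y -> m <= y.

Definition is_min_supp (f : rat -> K) (m : rat) : Prop :=
  f m != 0 /\ forall y, f y != 0 -> m <= y.

(* valuation: min of the support, None standing for +infinity *)
Definition hval (f : rat -> K) : option rat :=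
  match excluded_middle_informative (exists m, is_min_supp f m) with
  | left H => Some (proj1_sig (constructive_indefinite_description _ H))
  | right _ => None
  end.

(* The operator L = a_n phi_l^n + ... + a_0; coefficient of z^gamma in
   L(f) = sum_i a_i(z) f(z^(l^i)). *)
Definition Lop (l n : nat) (a : nat -> {poly K}) (f : rat -> K) : rat -> K :=
  fun gamma => \sum_(i < n.+1) \sum_(j < size (a i))
     (a i)`_j * f ((gamma - j%:R) / (l ^ i)%:R).

(* P(L), encoded by the pairs (i, j) standing for the point (l^i, j). *)
Definition PL (n : nat) (a : nat -> {poly K}) : seq (nat * nat) :=
  [seq ij <- [seq (i, j) | i <- iota 0 n.+1, j <- iota 0 (size (a i))]
     | (a ij.1)`_ij.2 != 0].

Definition piL (l n : nat) (a : nat -> {poly K}) (q : option rat) : option rat :=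
  match q with
  | None => None
  | Some q =>
    let v ij := (q - (ij.2)%:R) / (l ^ ij.1)%:R in
    Some (foldr (fun ij m => Num.max m (v ij)) (v (head (0, 0)%N (PL n a))) (PL n a))
  end.

(* The generating set of the Newton polygon:
   {(l^i, y) : 0 <= i <= n, y >= val a_i} (rational points). *)
Definition NPgen (l n : nat) (a : nat -> {poly K}) (x y : rat) : Prop :=
  exists i : nat, (i <= n)%N /\ x = (l ^ i)%:R /\
    exists j0 : nat, (a i)`_j0 != 0 /\ j0%:R <= y.

(* mu is the slope of a non-vertical edge of N(L): the non-vertical line
   y = mu x + c supports N(L) (the generating set lies on or above it) and
   meets it in a segment of positive length (two points with distinct x). *)
Definition slopeL (l n : nat) (a : nat -> {poly K}) (mu : rat) : Prop :=
  exists c : rat,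
    (forall x y, NPgen l n a x y -> mu * x + c <= y) /\
    exists x1 y1 x2 y2, NPgen l n a x1 y1 /\ NPgen l n a x2 y2 /\ x1 != x2 /\
      y1 = mu * x1 + c /\ y2 = mu * x2 + c.

End Hahn.

From Stdlib Require Import Classical ClassicalEpsilon FunctionalExtensionality.
From mathcomp Require Import all_boot all_order all_algebra.
From mathcomp Require Import ring lra.
Import Order.TTheory GRing.Theory Num.Theory.
Local Open Scope ring_scope.
Set Implicit Arguments. Unset Strict Implicit.

(* Let v = val f and weigh each point (l^i, j) of P(L) by j + l^i v, the
   valuation of the term a_ij z^j f(z^(l^i)) of L(f).  If the minimal weight m
   is attained at a single point, that term alone contributes to the
   coefficient of z^m and no term reaches below, so val g = m; minimality of m
   over P(L) then says exactly that pi(m) = v.  Otherwise m is attained at two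
   points with distinct abscissae, and the line y = -v x + m supports the
   Newton polygon along an edge of slope -v. *)

Section Valuation.
Variable K : fieldType.
Implicit Types f : rat -> K.

Lemma hval_min_supp f m : is_min_supp f m -> hval f = Some m.
Proof.
move=> [fm mmin]; rewrite /hval; case: excluded_middle_informative => [H|[]].
  case: (constructive_indefinite_description _ H) => x [fx xmin] /=.
  by congr Some; apply/le_anti; rewrite xmin // mmin.
by exists m.
Qed.

Lemma hval_eq0 f : f =1 (fun=> 0) -> hval f = None.
Proof.
move=> f0; rewrite /hval; case: excluded_middle_informative => [H|//].
by exfalso; case: H => m [fm _]; rewrite f0 eqxx in fm.
Qed.

End Valuation.

Section Operator.
Variables (K : fieldType) (n : nat) (a : nat -> {poly K}).

Lemma mem_PL i j :
  ((i, j) \in PL n a) = [&& (i <= n)%N, (j < size (a i))%N & (a i)`_j != 0].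
Proof.
rewrite /PL mem_filter andbC andbA; congr andb.
apply/allpairsPdep/andP => [[i' [j' [hi hj [-> ->]]]]|[hi hj]].
  by move: hi hj; rewrite !mem_iota.
by exists i, j; rewrite !mem_iota.
Qed.

Lemma PL_uniq : uniq (PL n a).
Proof.
apply/filter_uniq/allpairs_uniq_dep => [||[i j] [i' j'] _ _ /= [-> ->]] //.
  exact: iota_uniq.
by move=> i _; exact: iota_uniq.
Qed.

Lemma PL_neq0 : a 0%N != 0 -> PL n a != [::].
Proof.
move=> a0; have : (0%N, (size (a 0%N)).-1) \in PL n a.
  by rewrite mem_PL -lead_coefE lead_coef_eq0 a0 andbT prednK ?leqnn ?size_poly_gt0.
by case: (PL n a).
Qed.

Lemma Lop_PL (l : nat) (f : rat -> K) gamma :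
  Lop l n a f gamma = \sum_(ij <- PL n a)
    (a ij.1)`_ij.2 * f ((gamma - (ij.2)%:R) / (l ^ ij.1)%:R).
Proof.
have iota0E m : iota 0 m = index_iota 0 m by rewrite /index_iota subn0.
rewrite big_filter big_mkcond big_allpairs_dep iota0E big_mkord.
apply: eq_bigr => i _; rewrite iota0E big_mkord.
by apply: eq_bigr => j _; case: eqP => // ->; rewrite mul0r.
Qed.

End Operator.

Lemma argmin_seq (T : eqType) d (R : orderType d) (w : T -> R) (s : seq T) :
  s != [::] -> exists2 x, x \in s & {in s, forall y, (w x <= w y)%O}.
Proof.
elim: s => [//|x s IH] _; case: (eqVneq s [::]) => [->|/IH [y ys ymin]].
  by exists x => [|y]; rewrite ?mem_head // inE => /eqP ->.
have [xy|yx] := leP (w x) (w y).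
  exists x => [|z]; first exact: mem_head.
  by rewrite inE => /predU1P [->//|/ymin]; apply: le_trans.
exists y => [|z]; first by rewrite inE ys orbT.
by rewrite inE => /predU1P [->|/ymin//]; apply: ltW.
Qed.

Lemma foldr_max_attained (T : eqType) (R : realDomainType) (h : T -> R)
    (s : seq T) x0 x p :
  x0 <= p -> x \in s -> h x = p -> {in s, forall y, h y <= p} ->
  foldr (fun y m => Num.max m (h y)) x0 s = p.
Proof.
move=> x0p xs hxp ub; subst p; apply/le_anti/andP; split.
  clear xs; elim: s ub => //= y s IH ub; rewrite ge_max ub ?mem_head // andbT.
  by apply: IH => z zs; rewrite ub // inE zs orbT.
elim: s xs {ub} => //= y s IH; rewrite le_max inE => /predU1P [->|/IH ->//].
by rewrite lexx orbT.
Qed.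

(* The valuation of z^j f(z^(l^i)) when val f = v. *)
Definition term_val (l : nat) (v : rat) (ij : nat * nat) : rat :=
  (ij.2)%:R + (l ^ ij.1)%:R * v.

Section Newton.
Variables (K : fieldType) (l n : nat) (a : nat -> {poly K}).
Hypothesis l_gt0 : (0 < l)%N.

Let expl_gt0 i : 0 < (l ^ i)%:R :> rat.
Proof. by rewrite ltr0n expn_gt0 l_gt0. Qed.

Lemma le_term_val v q i j :
  (q <= term_val l v (i, j)) = ((q - j%:R) / (l ^ i)%:R <= v).
Proof. by rewrite ler_pdivrMr // lerBlDl mulrC. Qed.

Lemma term_val_le v q i j :
  (term_val l v (i, j) <= q) = (v <= (q - j%:R) / (l ^ i)%:R).
Proof. by rewrite ler_pdivlMr // lerBrDl mulrC. Qed.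

Lemma term_val_subKdiv v i j : (term_val l v (i, j) - j%:R) / (l ^ i)%:R = v.
Proof. by rewrite /term_val addrAC subrr add0r mulrC mulKf // lt0r_neq0. Qed.

Lemma mem_PL_coef i j : (i <= n)%N -> (a i)`_j != 0 -> (i, j) \in PL n a.
Proof.
move=> hi aij; rewrite mem_PL hi aij andbT /= ltnNge.
by apply: contra aij => /(nth_default 0) ->.
Qed.

Section Solution.
Variables (f : rat -> K) (v : rat).
Hypothesis v_min : forall y, f y != 0 -> v <= y.

Lemma term_coef_eq0 q i j :
  q < term_val l v (i, j) -> f ((q - j%:R) / (l ^ i)%:R) = 0.
Proof.
move=> qlt; apply/eqP; apply: contraTT qlt => /v_min.
by rewrite -term_val_le -leNgt.
Qed.

Lemma Lop_eq0_below q :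
  {in PL n a, forall ij, q < term_val l v ij} -> Lop l n a f q = 0.
Proof.
by move=> qlt; rewrite Lop_PL big1_seq // => -[i j] /= /qlt /term_coef_eq0 ->;
  rewrite mulr0.
Qed.

Lemma Lop_at_unique_min ij0 : ij0 \in PL n a ->
  {in PL n a, forall ij, ij != ij0 -> term_val l v ij0 < term_val l v ij} ->
  Lop l n a f (term_val l v ij0) = (a ij0.1)`_ij0.2 * f v.
Proof.
move=> ij0P ij0min; rewrite Lop_PL (bigD1_seq ij0) ?PL_uniq //=.
case: ij0 ij0P ij0min => i0 j0 /= ij0P ij0min; rewrite term_val_subKdiv.
rewrite big_seq_cond big1 ?addr0 // => -[i j] /andP [ijP ij0'].
by rewrite term_coef_eq0 ?mulr0 ?ij0min.
Qed.

Lemma is_min_supp_Lop ij0 : f v != 0 -> ij0 \in PL n a ->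
  {in PL n a, forall ij, ij != ij0 -> term_val l v ij0 < term_val l v ij} ->
  is_min_supp (Lop l n a f) (term_val l v ij0).
Proof.
move=> fv ij0P ij0min; split.
  rewrite Lop_at_unique_min // mulf_neq0 //.
  by case: ij0 ij0P {ij0min} => i0 j0; rewrite mem_PL => /and3P [].
move=> q; apply: contraR; rewrite -ltNge => qlt.
apply/eqP/Lop_eq0_below => ij ijP.
by case: (eqVneq ij ij0) => [->//|/(ij0min _ ijP)]; apply: lt_trans.
Qed.

End Solution.

Lemma piL_term_val v ij0 : ij0 \in PL n a ->
  {in PL n a, forall ij, term_val l v ij0 <= term_val l v ij} ->
  piL l n a (Some (term_val l v ij0)) = Some v.
Proof.
move=> ij0P ij0min; congr Some.
have bound ij : ij \in PL n a -> (term_val l v ij0 - (ij.2)%:R) / (l ^ ij.1)%:R <= v.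
  by case: ij => i j /ij0min; rewrite le_term_val.
apply: (foldr_max_attained (x := ij0)) => //; last first.
- by case: ij0 {ij0P ij0min bound} => i0 j0; rewrite term_val_subKdiv.
- by apply: bound; case: (PL n a) ij0P => // ij s _; apply: mem_head.
Qed.

Lemma slopeL_of_tie v ij0 ij1 : (1 < l)%N -> ij0 \in PL n a -> ij1 \in PL n a ->
  ij1 != ij0 -> term_val l v ij1 = term_val l v ij0 ->
  {in PL n a, forall ij, term_val l v ij0 <= term_val l v ij} ->
  slopeL l n a (- v).
Proof.
case: ij0 ij1 => [i0 j0] [i1 j1] l_gt1 ij0P ij1P ij10 tie ij0min.
exists (term_val l v (i0, j0)); split.
  move=> x y [i [hi [-> [j [aij jy]]]]].
  by have := ij0min _ (mem_PL_coef hi aij); rewrite /term_val /=; lra.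
have i10 : i1 != i0.
  apply: contra_neq ij10 => ei; move: tie; rewrite /term_val /= ei.
  by move/addIr/eqP; rewrite eqr_nat => /eqP ->.
move: ij0P ij1P; rewrite !mem_PL => /and3P [hi0 _ a0] /and3P [hi1 _ a1].
exists (l ^ i0)%:R, j0%:R, (l ^ i1)%:R, j1%:R.
split; first by exists i0; split => //; split => //; exists j0.
split; first by exists i1; split => //; split => //; exists j1.
split; first by rewrite eqr_nat eqn_exp2l // eq_sym.
by split; [|rewrite -tie]; rewrite /term_val /=; ring.
Qed.

End Newton.

Theorem mainTheorem4 (K : fieldType) (l n : nat) (a : nat -> {poly K})
  (hl : (2 <= l)%N) (hn : (1 <= n)%N) (ha0 : a 0%N != 0) (han : a n != 0)
  (g : rat -> K) (hg : hahn g) :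
  forall f : rat -> K, hahn f -> (forall gamma, Lop l n a f gamma = g gamma) ->
    hval f = piL l n a (hval g) \/
    exists mu : rat, slopeL l n a mu /\ hval f = Some (- mu).
Proof.
move=> f hf hL; have l_gt0 : (0 < l)%N by apply: ltnW.
have -> : g = Lop l n a f by apply: functional_extensionality => q; rewrite hL.
case: (classic (exists y, f y != 0)) => [f_neq0|f_eq0]; last first.
  have f0 : f =1 (fun=> 0).
    by move=> y; apply/eqP/negPn/negP => fy; apply: f_eq0; exists y.
  left; rewrite (hval_eq0 f0) hval_eq0 // => q.
  by rewrite /Lop big1 // => i _; apply: big1 => j _; rewrite f0 mulr0.
have [v [fv v_min]] := hf _ f_neq0 (fun _ => id).
have [ij0 ij0P ij0min] := argmin_seq (term_val l v) (PL_neq0 n ha0).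
rewrite (hval_min_supp (conj fv v_min)).
case: (classic (exists2 ij, ij \in PL n a &
                  ij != ij0 /\ term_val l v ij = term_val l v ij0)).
  move=> [ij1 ij1P [ij10 tie]]; right; exists (- v); rewrite opprK.
  by split => //; apply: slopeL_of_tie hl ij0P ij1P ij10 tie ij0min.
move=> no_tie; left.
rewrite (hval_min_supp (is_min_supp_Lop l_gt0 v_min fv ij0P _)) ?piL_term_val //.
move=> ij ijP ij0'; rewrite lt_def ij0min // andbT eq_sym.
by apply/eqP => tie; apply: no_tie; exists ij.
Qed.
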